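(* Let $\mathbb{G},\mathbb{M}$ be graded groups, $T:\mathbb{G}\to\mathbb{M}$ an injective h-homomorphism and $H=T(\mathbb{G})$. The following are equivalent: (1) there exists a normal homogeneous subgroup $N$ of $\mathbb{M}$ complementary to $H$; (2) there exists an h-epimorphism $p:\mathbb{M}\to H$ with $p|_H=\mathrm{Id}_H$; (3) $T$ is an h-monomorphism.
   Context: Graded group: connected simply connected real Lie group with Lie algebra $V_1\oplus\cdots\oplus V_\iota$, $[V_i,V_j]\subset V_{i+j}$; dilations act by $r^i$ on $V_i$. h-homomorphism: group homomorphism commuting with dilations; h-epimorphism (resp. h-monomorphism): h-homomorphism having a right (resp. left) inverse which is an h-homomorphism. Homogeneous subgroup: closed connected simply connected Lie subgroup invariant under dilations (image $H$ is a homogeneous subgroup, itself a graded group). $N,H$ complementary: $NH=\mathbb{M}$ and $N\cap H=\{e\}$. *)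

From HB Require Import structures.
From mathcomp Require Import all_boot all_order all_algebra.
From mathcomp Require Import all_classical all_reals all_analysis.
Set Implicit Arguments. Unset Strict Implicit. Unset Printing Implicit Defensive.
Import Order.TTheory GRing.Theory Num.Theory.
Import numFieldNormedType.Exports.
Local Open Scope classical_set_scope.
Local Open Scope ring_scope.

(* Graded groups are modelled in exponential coordinates: a graded group is
   R^n (row vectors) with a polynomial group law with identity 0, together
   with dilations delta_r (x)_j = r^(w_j) x_j, where the weights w_j >= 1 are
   the degrees of a graded basis of V_1 (+) ... (+) V_iota, and the dilations
   are group automorphisms. *)

Inductive polyfn (R : realType) (m : nat) : ('rV[R]_m -> R) -> Prop :=
| pf_const (c : R) : polyfn (fun _ => c)
| pf_coord (i : 'I_m) : polyfn (fun x => x 0 i)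
| pf_add f g : polyfn f -> polyfn g -> polyfn (fun x => f x + g x)
| pf_mul f g : polyfn f -> polyfn g -> polyfn (fun x => f x * g x).

Definition dilw (R : realType) (n : nat) (w : 'I_n -> nat) (r : R)
  (x : 'rV[R]_n) : 'rV[R]_n := \row_i (r ^+ w i * x 0 i).

Record graded_group (R : realType) := GradedGroup {
  gdim : nat;
  gwt : 'I_gdim -> nat;
  gmul : 'rV[R]_gdim -> 'rV[R]_gdim -> 'rV[R]_gdim;
  ginv : 'rV[R]_gdim -> 'rV[R]_gdim;
  gwt_pos : forall i, (0 < gwt i)%N;
  gmulA : forall x y z, gmul x (gmul y z) = gmul (gmul x y) z;
  gmul0x : forall x, gmul 0 x = x;
  gmulx0 : forall x, gmul x 0 = x;
  gmulVx : forall x, gmul (ginv x) x = 0;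
  gmulxV : forall x, gmul x (ginv x) = 0;
  gmul_poly : forall i : 'I_gdim,
    polyfn (fun z : 'rV[R]_(gdim + gdim) => gmul (lsubmx z) (rsubmx z) 0 i);
  ginv_poly : forall i : 'I_gdim, polyfn (fun x => ginv x 0 i);
  gdil_mul : forall (r : R) x y, 0 < r ->
    dilw gwt r (gmul x y) = gmul (dilw gwt r x) (dilw gwt r y)
}.

Definition gcar (R : realType) (G : graded_group R) := 'rV[R]_(gdim G).
Definition gdil (R : realType) (G : graded_group R) (r : R) (x : gcar G)
  : gcar G := dilw (@gwt R G) r x.
Arguments gdil {R} G r x.

Definition hhom (R : realType) (G M : graded_group R) (f : gcar G -> gcar M)
  := (forall x y, f (gmul x y) = gmul (f x) (f y)) /\
     (forall (r : R) x, 0 < r -> f (gdil G r x) = gdil M r (f x)).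

Definition hmono (R : realType) (G M : graded_group R) (f : gcar G -> gcar M)
  := hhom f /\ exists g : gcar M -> gcar G, hhom g /\ forall x, g (f x) = x.

(* Homogeneous subgroup: closed, connected subgroup invariant under dilations
   (the Lie-subgroup and simple connectedness conditions are automatic). *)
Definition homogeneous_subgroup (R : realType) (M : graded_group R)
  (N : set (gcar M)) :=
  [/\ N 0,
      (forall x y, N x -> N y -> N (gmul x y)) /\
      (forall x, N x -> N (ginv x)),
      closed N, connected N &
      (forall (r : R) x, 0 < r -> N x -> N (gdil M r x))].

Definition normal_subgroup (R : realType) (M : graded_group R)
  (N : set (gcar M)) :=
  forall g x, N x -> N (gmul (gmul g x) (ginv g)).

Definition complementary (R : realType) (M : graded_group R)
  (N H : set (gcar M)) :=
  (forall m, exists n h, [/\ N n, H h & m = gmul n h]) /\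
  (forall x, N x -> H x -> x = 0).

(* p : M -> H is an h-epimorphism onto the homogeneous subgroup H (with the
   graded structure of M restricted to H): p is an h-homomorphism with values
   in H, having a right inverse s : H -> M which is an h-homomorphism. *)
Definition hepi_onto (R : realType) (M : graded_group R)
  (H : set (gcar M)) (p : gcar M -> gcar M) :=
  [/\ hhom p, (forall m, H (p m)) &
      exists s : gcar M -> gcar M,
        [/\ (forall x y, H x -> H y -> s (gmul x y) = gmul (s x) (s y)),
            (forall (r : R) x, 0 < r -> H x -> s (gdil M r x) = gdil M r (s x))
          & (forall h, H h -> p (s h) = h)]].

From mathcomp Require Import all_boot all_order all_algebra.
From mathcomp Require Import all_classical all_reals all_analysis.
From mathcomp Require Import zify ring lra.
Set Implicit Arguments. Unset Strict Implicit. Unset Printing Implicit Defensive.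
Import Order.TTheory GRing.Theory Num.Theory.
Import numFieldNormedType.Exports.
Local Open Scope classical_set_scope.
Local Open Scope ring_scope.

(* (1) => (2): send m = n h (n in N, h in H) to h; normality of N makes this
   a homomorphism.  (2) => (1): take N = ker p.  (2) <=> (3): p = T \o g for
   a left inverse g of T.
   The one analytic point is that ker p is closed, i.e. that h-homomorphisms
   are continuous.  The group law is polynomial and homogeneous for the
   dilations, so coordinate j of x y is x_j + y_j plus a polynomial in the
   coordinates of lower weight.  Hence t |-> (t_1 e_1) ... (t_n e_n) has a
   continuous inverse, computed by a finite triangular iteration, and
   f (s e_i) = delta_(s^(1/w_i)) f (e_i) for s > 0 makes f continuous along
   each axis, so f is continuous. *)

Section GroupLaws.
Variables (R : realType) (G : graded_group R).
Implicit Types a b c d x y : gcar G.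

Lemma gmulI a : injective (@gmul R G a).
Proof.
by move=> x y e; rewrite -(gmul0x x) -(gmul0x y) -(gmulVx a) -!gmulA e.
Qed.

Lemma gmulIr a : injective (fun x => @gmul R G x a).
Proof.
by move=> x y e; rewrite -(gmulx0 x) -(gmulx0 y) -(gmulxV a) !gmulA /= e.
Qed.

Lemma ginv0 : ginv (0 : gcar G) = 0.
Proof. by rewrite -[LHS]gmul0x gmulxV. Qed.

Lemma gmul_conj a b c d : gmul (gmul a b) (gmul c d) =
  gmul (gmul a (gmul (gmul b c) (ginv b))) (gmul b d).
Proof. by rewrite -!gmulA (gmulA (ginv b) b d) gmulVx gmul0x. Qed.

End GroupLaws.

Section HhomLaws.
Variables (R : realType) (G M : graded_group R) (f : gcar G -> gcar M).
Hypothesis hf : hhom f.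

Lemma hhom0 : f 0 = 0.
Proof. by apply: (@gmulI _ _ (f 0)); rewrite -hf.1 !gmulx0. Qed.

Lemma hhomV x : f (ginv x) = ginv (f x).
Proof. by apply: (@gmulI _ _ (f x)); rewrite -hf.1 !gmulxV hhom0. Qed.

End HhomLaws.

Section Dilations.
Variables (R : realType) (n : nat) (w : 'I_n -> nat).
Implicit Types x : 'rV[R]_n.

Lemma dil1w x : dilw w 1 x = x.
Proof. by apply/matrixP => i j; rewrite !mxE ord1 expr1n mul1r. Qed.

Lemma dilw0 (r : R) : dilw w r 0 = 0.
Proof. by apply/matrixP => i j; rewrite !mxE mulr0. Qed.

Lemma dil0w x : (forall i, (0 < w i)%N) -> dilw w 0 x = 0.
Proof.
by move=> w_gt0; apply/matrixP => i j; rewrite !mxE expr0n eqn0Ngt w_gt0 mul0r.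
Qed.

End Dilations.

Definition agree_below {R : realType} {n : nat} (wt : 'I_n -> nat) (w : nat)
    (x y : 'rV[R]_n) :=
  forall i, (wt i < w)%N -> x 0 i = y 0 i.

Lemma poly_eq0_pos (R : numDomainType) (p : {poly R}) :
  (forall r : R, 0 < r -> p.[r] = 0) -> p = 0.
Proof.
move=> p0; pose rs := [seq i.+1%:R : R | i <- iota 0 (size p)].
apply: (@roots_geq_poly_eq0 _ _ rs); last by rewrite size_map size_iota.
- by apply/allP => _ /mapP[i _ ->]; apply/rootP/p0/ltr0Sn.
- by rewrite map_inj_uniq ?iota_uniq // => i j /eqP; rewrite eqr_nat => /eqP[].
Qed.

Section WeightedPolynomials.
Variables (R : realType) (m : nat) (wt : 'I_m -> nat).
Hypothesis wt_gt0 : forall i, (0 < wt i)%N.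
Implicit Types (a : 'I_m -> nat) (z v : 'rV[R]_m).

Definition monomial a z : R := \prod_i z 0 i ^+ a i.
Definition wdeg a : nat := (\sum_i a i * wt i)%N.
Definition eval_terms (L : seq (R * ('I_m -> nat))) z : R :=
  \sum_(t <- L) t.1 * monomial t.2 z.

Lemma monomial_delta k z : monomial (fun i => (i == k) : nat) z = z 0 k.
Proof.
rewrite /monomial (bigD1 k) //= eqxx expr1 big1 ?mulr1 // => i /negbTE ->.
exact: expr0.
Qed.

Lemma monomialD a b z :
  monomial (fun i => (a i + b i)%N) z = monomial a z * monomial b z.
Proof. by rewrite /monomial -big_split; apply: eq_bigr => i _; rewrite exprD. Qed.

Lemma monomial_dilw a r z : monomial a (dilw wt r z) = r ^+ wdeg a * monomial a z.
Proof.
rewrite /monomial /wdeg -prodrXr -big_split; apply: eq_bigr => i _ /=.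
by rewrite mxE exprMn -exprM mulnC.
Qed.

Lemma polyfn_terms F : polyfn F -> exists L, F =1 eval_terms L.
Proof.
elim=> [c|k|f g _ [L1 fL1] _ [L2 gL2]|f g _ [L1 fL1] _ [L2 gL2]].
- exists [:: (c, fun _ => 0%N)] => z; rewrite /eval_terms big_seq1 /monomial.
  by rewrite big1 ?mulr1 // => i _; rewrite expr0.
- exists [:: (1, fun i => (i == k) : nat)] => z.
  by rewrite /eval_terms big_seq1 mul1r monomial_delta.
- by exists (L1 ++ L2) => z; rewrite fL1 gL2 /eval_terms big_cat.
- exists [seq (t.1 * u.1, fun i => (t.2 i + u.2 i)%N) | t <- L1, u <- L2] => z.
  rewrite fL1 gL2 /eval_terms big_allpairs_dep /= mulr_suml.
  apply: eq_bigr => t _; rewrite mulr_sumr; apply: eq_bigr => u _ /=.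
  by rewrite monomialD; ring.
Qed.

(* Homogeneity is a polynomial identity in r > 0; compare the coefficients
   of 'X^w. *)
Lemma homogeneous_terms L w z :
  (forall r, 0 < r -> eval_terms L (dilw wt r z) = r ^+ w * eval_terms L z) ->
  eval_terms L z = eval_terms [seq t <- L | wdeg t.2 == w] z.
Proof.
move=> homL.
pose P : {poly R} := \sum_(t <- L) (t.1 * monomial t.2 z) *: 'X^(wdeg t.2)
  - eval_terms L z *: 'X^w.
have P0 : P = 0.
  apply: poly_eq0_pos => r r0; apply/eqP.
  rewrite hornerD hornerN horner_sum hornerZ hornerXn mulrC -homL // subr_eq0.
  apply/eqP/eq_bigr => t _.
  by rewrite hornerZ hornerXn monomial_dilw; ring.
have /eqP := congr1 (fun q : {poly R} => q`_w) P0.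
rewrite coefB coef_sum coefZ coefXn eqxx mulr1 coef0 subr_eq0 => /eqP <-.
rewrite /eval_terms big_filter [RHS]big_mkcond; apply: eq_bigr => t _.
by rewrite coefZ coefXn eq_sym; case: eqP; rewrite ?mulr1 ?mulr0.
Qed.

Lemma wdeg_top a k : (wdeg a <= wt k)%N -> (0 < a k)%N ->
  forall i, a i = (i == k) :> nat.
Proof.
rewrite /wdeg (bigD1 k) //= => deg_le ak.
set S := (\sum_(i < m | i != k) a i * wt i)%N in deg_le.
have wk := wt_gt0 k.
have /eqP : S = 0%N by nia.
have ak1 : a k = 1%N by nia.
rewrite sum_nat_eq0 => /forallP S0 i; case: eqP => [->//|/eqP ik].
move: (S0 i) (wt_gt0 i); rewrite ik /= muln_eq0.
by case: (a i) => // ?; case: (wt i).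
Qed.

(* A monomial of weighted degree w either is a single coordinate of weight
   w, or only involves coordinates of weight < w. *)
Lemma monomial_add_top a z v : agree_below wt (wdeg a) v 0 ->
  monomial a (z + v) = monomial a z + monomial a v - monomial a 0.
Proof.
move=> v_low.
have [/existsP[k /andP[top ak]]|] :=
  boolP [exists k, (wdeg a <= wt k)%N && (0 < a k)%N].
  have -> : monomial a = monomial (fun i => (i == k) : nat).
    by apply: funext => u; apply: eq_bigr => i _; rewrite (@wdeg_top a k top ak).
  by rewrite !monomial_delta !mxE; ring.
rewrite negb_exists => /forallP low.
have mv u : monomial a (u + v) = monomial a u.
  apply: eq_bigr => i _; rewrite mxE.
  have [->|ai] := posnP (a i); first by rewrite !expr0.
  by move: (low i); rewrite ai andbT -ltnNge => /v_low ->; rewrite mxE addr0.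
by move: (mv 0); rewrite add0r => ->; rewrite mv; ring.
Qed.

Lemma polyfn_add_top (F : 'rV[R]_m -> R) w : polyfn F ->
  (forall r z, 0 < r -> F (dilw wt r z) = r ^+ w * F z) ->
  forall z v, agree_below wt w v 0 -> F (z + v) = F z + F v - F 0.
Proof.
move=> /polyfn_terms[L FL] homF z v v_low.
have FE u : F u = eval_terms [seq t <- L | wdeg t.2 == w] u.
  by rewrite FL; apply: homogeneous_terms => r r0; rewrite -!FL homF.
rewrite !FE /eval_terms -big_split -sumrB /= big_seq [RHS]big_seq.
apply: eq_bigr => t; rewrite mem_filter => /andP[/eqP deg_t _].
by rewrite monomial_add_top ?deg_t //; ring.
Qed.

End WeightedPolynomials.

Section TriangularLaw.
Variables (R : realType) (G : graded_group R).
Local Notation n := (gdim G).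
Local Notation wt := (@gwt R G).

Definition pair_wt (i : 'I_(n + n)) : nat :=
  match fintype.split i with inl a => wt a | inr b => wt b end.

Lemma pair_wt_gt0 i : (0 < pair_wt i)%N.
Proof. by rewrite /pair_wt; case: (fintype.split i) => k; apply: gwt_pos. Qed.

Definition gmul_coord (j : 'I_n) (z : 'rV[R]_(n + n)) : R :=
  (gmul (lsubmx z) (rsubmx z) : 'rV[R]_n) 0 j.

Lemma gmul_coord_row j (x y : 'rV[R]_n) :
  gmul_coord j (row_mx x y) = (gmul x y : 'rV[R]_n) 0 j.
Proof. by rewrite /gmul_coord row_mxKl row_mxKr. Qed.

Lemma gmul_coord_dilw j r z : 0 < r ->
  gmul_coord j (dilw pair_wt r z) = r ^+ wt j * gmul_coord j z.
Proof.
have lsub : lsubmx (dilw pair_wt r z) = dilw wt r (lsubmx z).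
  by apply/matrixP => i k; rewrite !mxE /pair_wt (unsplitK (inl _ k)).
have rsub : rsubmx (dilw pair_wt r z) = dilw wt r (rsubmx z).
  by apply/matrixP => i k; rewrite !mxE /pair_wt (unsplitK (inr _ k)).
by move=> r0; rewrite /gmul_coord lsub rsub -gdil_mul // mxE.
Qed.

Lemma agree_below_row_mx w (x y : 'rV[R]_n) :
  agree_below wt w x 0 -> agree_below wt w y 0 ->
  agree_below pair_wt w (row_mx x y) 0.
Proof.
move=> x_low y_low i; rewrite !mxE /pair_wt.
by case: (fintype.split i) => k /[dup] /x_low + /y_low; rewrite !mxE.
Qed.

Lemma gmul_triangular j (x y x' y' : 'rV[R]_n) :
  agree_below wt (wt j) x x' -> agree_below wt (wt j) y y' ->
  (gmul x' y' : 'rV[R]_n) 0 j =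
    (gmul x y : 'rV[R]_n) 0 j + (x' 0 j - x 0 j) + (y' 0 j - y 0 j).
Proof.
move=> xx' yy'.
have low (u u' : 'rV[R]_n) :
    agree_below wt (wt j) u u' -> agree_below wt (wt j) (u' - u) 0.
  by move=> uu' i /uu' e; rewrite !mxE e subrr.
have zero_low : agree_below wt (wt j) (0 : 'rV[R]_n) 0 by [].
have coord_add := polyfn_add_top (F := gmul_coord j) pair_wt_gt0
  (gmul_poly j) (@gmul_coord_dilw j).
have coord0 : gmul_coord j 0 = 0 by rewrite -row_mx0 gmul_coord_row gmul0x mxE.
have := coord_add (row_mx x y) _
  (agree_below_row_mx (low _ _ xx') (low _ _ yy')).
rewrite add_row_mx !(addrC _ (_ - _)) !subrK !gmul_coord_row coord0 subr0 => ->.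
have := coord_add (row_mx (x' - x) 0) _
  (agree_below_row_mx zero_low (low _ _ yy')).
rewrite add_row_mx add0r addr0 !gmul_coord_row coord0 subr0 gmulx0 gmul0x => ->.
by rewrite !mxE; ring.
Qed.

End TriangularLaw.

Lemma continuousT_comp (T U V : topologicalType) (f : T -> U) (g : U -> V) :
  continuous f -> continuous g -> continuous (g \o f).
Proof.
by move=> f_cont g_cont x; exact: continuous_comp (f_cont x) (g_cont _).
Qed.

Lemma continuous_mx (R : numFieldType) (T : topologicalType) m n
    (f : T -> 'M[R]_(m, n)) :
  (forall i j, continuous (fun t => f t i j)) -> continuous f.
Proof.
move=> f_cont t; apply/cvg_ballP => e e0.
have : \forall s \near t, forall ij : 'I_m * 'I_n,
    ball (f t ij.1 ij.2) e (f s ij.1 ij.2).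
  by apply: filter_forall => ij; exact: (cvg_ball (f_cont ij.1 ij.2 t) e0).
by apply: filterS => s fs; split => // i j; exact: fs (i, j).
Qed.

Lemma continuous_row_mx (R : numFieldType) (T : topologicalType) m n1 n2
    (a : T -> 'M[R]_(m, n1)) (b : T -> 'M[R]_(m, n2)) :
  continuous a -> continuous b -> continuous (fun t => row_mx (a t) (b t)).
Proof.
move=> a_cont b_cont; apply: continuous_mx => i j.
under eq_fun do rewrite mxE.
case: (fintype.split j) => k.
- exact: (continuousT_comp a_cont (coord_continuous (i := i) (j := k))).
- exact: (continuousT_comp b_cont (coord_continuous (i := i) (j := k))).
Qed.

Lemma polyfn_continuous (R : realType) m (F : 'rV[R]_m -> R) :
  polyfn F -> continuous F.
Proof.
elim=> [c|i|f g _ f_cont _ g_cont|f g _ f_cont _ g_cont].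
- exact: cst_continuous.
- exact: coord_continuous.
- by move=> x; exact: (continuousD (f_cont x) (g_cont x)).
- by move=> x; exact: (continuousM (f_cont x) (g_cont x)).
Qed.

Lemma gmul_continuous (R : realType) (G : graded_group R) (T : topologicalType)
    (a b : T -> 'rV[R]_(gdim G)) :
  continuous a -> continuous b -> continuous (fun t => gmul (a t) (b t)).
Proof.
move=> a_cont b_cont.
have mul_cont : continuous
    (fun z : 'rV[R]_(gdim G + gdim G) => gmul (lsubmx z) (rsubmx z)).
  by apply: continuous_mx => i j; rewrite ord1; apply/polyfn_continuous/gmul_poly.
have -> : (fun t => gmul (a t) (b t)) =
    (fun z => gmul (lsubmx z) (rsubmx z)) \o (fun t => row_mx (a t) (b t)).
  by apply: funext => t; rewrite /= row_mxKl row_mxKr.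
exact: (continuousT_comp (continuous_row_mx a_cont b_cont) mul_cont).
Qed.

Lemma dilw_continuous (R : realType) n (w : 'I_n -> nat) (x : 'rV[R]_n) :
  continuous (fun r : R => dilw w r x).
Proof.
apply: continuous_mx => i j; under eq_fun do rewrite mxE.
move=> r; exact: (continuousM (exprn_continuous (n := w j) (x := r))
  (cst_continuous (x := x 0 j) (x0 := r))).
Qed.

(* N is the union of the dilation arcs r |-> delta_r x, r in [0, 1], which
   all pass through 0 = delta_0 x. *)
Lemma dil_stable_connected (R : realType) (M : graded_group R)
    (N : set (gcar M)) :
  N 0 -> (forall (r : R) x, 0 < r -> N x -> N (gdil M r x)) -> connected N.
Proof.
move=> N0 N_dil; have w_gt0 := @gwt_pos R M.
pose arc (x : 'rV[R]_(gdim M)) := (fun r : R => dilw (@gwt R M) r x) @` `[0, 1].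
have -> : N = \bigcup_(x in N) arc x.
  apply/seteqP; split=> [x Nx|_ [x Nx [r r01 <-]]].
    by exists x => //; exists 1; rewrite ?dil1w //= in_itv /= ler01 lexx.
  have [->|r0] := eqVneq r 0; first by rewrite dil0w.
  move: r01; rewrite /= in_itv /= => /andP[r_ge0 _].
  by apply: N_dil => //; rewrite lt0r r0.
apply: bigcup_connected => [|x _].
  by exists 0 => x _; exists 0; rewrite ?dil0w //= in_itv /= lexx ler01.
apply: connected_continuous_connected; first exact: segment_connected.
exact/continuous_subspaceT/dilw_continuous.
Qed.

Section PositiveRoots.
Variable R : realType.
Implicit Types (u : R) (w : nat).

Definition pos_root w u : R := Num.max u 0 `^ w%:R^-1.

Lemma pos_root_le0 w u : (0 < w)%N -> u <= 0 -> pos_root w u = 0.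
Proof.
move=> w_gt0 u_le0; rewrite /pos_root (max_idPr u_le0) powR0 //.
by rewrite invr_eq0 pnatr_eq0 -lt0n.
Qed.

Lemma pos_root_gt0 w u : 0 < u -> 0 < pos_root w u.
Proof. by move=> u_gt0; rewrite /pos_root powR_gt0 // (max_idPl (ltW u_gt0)). Qed.

Lemma pos_rootK w u : (0 < w)%N -> 0 <= u -> pos_root w u ^+ w = u.
Proof.
move=> w_gt0 u_ge0; rewrite /pos_root (max_idPl u_ge0).
rewrite -powR_mulrn ?powR_ge0 // -powRrM mulVf ?powRr1 //.
by rewrite pnatr_eq0 -lt0n.
Qed.

Lemma continuous_pos_root w : (0 < w)%N -> continuous (pos_root w).
Proof.
move=> w_gt0; set a : R := w%:R^-1.
have a_gt0 : 0 < a by rewrite invr_gt0 ltr0n.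
move=> s0; have [s0_gt0|s0_le0] := ltP 0 s0.
  have near_exp : {near s0, (fun s => expR (a * ln s)) =1 pos_root w}.
    apply: filterS (lt_nbhsr s0_gt0) => s /= s_gt0.
    by rewrite /pos_root /powR (max_idPl (ltW s_gt0)) gt_eqF.
  apply: cvg_trans (near_eq_cvg near_exp) _.
  rewrite /pos_root /powR (max_idPl (ltW s0_gt0)) gt_eqF //.
  have aln_cont : {for s0, continuous (fun s => a * ln s)}.
    exact: (continuousM (@cst_continuous _ _ a s0) (continuous_ln s0_gt0)).
  exact: (continuous_comp aln_cont (@continuous_expR R (a * ln s0))).
rewrite /continuous_at (pos_root_le0 w_gt0 s0_le0).
apply/cvgrPdist_lt => e e_gt0; set d := e `^ a^-1.
have d_gt0 : 0 < d by rewrite powR_gt0.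
near=> s; rewrite sub0r normrN ger0_norm ?powR_ge0 //.
have max_lt_d : Num.max s 0 < d.
  rewrite gt_max d_gt0 andbT.
  have : `|s0 - s| < d.
    near: s.
    exact: (@cvgr_dist_lt _ _ _ (nbhs s0) _ id s0 (@cvg_id _ _) d d_gt0).
  rewrite distrC => /(le_lt_trans (ler_norm _)); lra.
have := gt0_ltr_powR a_gt0 _ _ max_lt_d.
rewrite !nnegrE le_max lexx orbT ltW //.
by rewrite /d -powRrM mulVf ?gt_eqF // powRr1 ?ltW //; apply.
Unshelve. all: end_near.
Qed.

End PositiveRoots.

Section AxisProducts.
Variables (R : realType) (G : graded_group R).
Local Notation n := (gdim G).
Local Notation wt := (@gwt R G).
Implicit Types (s : seq 'I_n) (t x : 'rV[R]_n).

Definition axis (i : 'I_n) (c : R) : 'rV[R]_n := \row_k (c * (k == i)%:R).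

Lemma axis0 i : axis i 0 = 0.
Proof. by apply/rowP => k; rewrite !mxE mul0r. Qed.

Lemma gdil_axis r i c : gdil G r (axis i c) = axis i (r ^+ wt i * c).
Proof.
by apply/rowP => k; rewrite !mxE; case: eqP => [->|_]; rewrite ?mulr0 ?mulr1.
Qed.

Lemma axis_continuous i : continuous (axis i).
Proof.
apply: continuous_mx => a k; under eq_fun do rewrite mxE.
by move=> c; exact: (continuousM (@cvg_id _ (nbhs c)) (@cst_continuous _ _ _ c)).
Qed.

Definition prod_axes s t : 'rV[R]_n :=
  foldr (fun i acc => gmul (axis i (t 0 i)) acc) 0 s.

Lemma prod_axes_triangular s j t t' : agree_below wt (wt j) t t' ->
  prod_axes s t' 0 j = prod_axes s t 0 j + (count_mem j s)%:R * (t' 0 j - t 0 j).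
Proof.
elim: s j t t' => [|i s IH] j t t' tt' /=; first by rewrite !mxE mul0r addr0.
have axis_agree : agree_below wt (wt j) (axis i (t 0 i)) (axis i (t' 0 i)).
  move=> k k_lt; rewrite !mxE; case: eqP => [ki|_]; last by rewrite !mulr0.
  by rewrite -ki tt'.
have prod_agree : agree_below wt (wt j) (prod_axes s t) (prod_axes s t').
  move=> k k_lt; rewrite (IH k t t') ?tt' ?subrr ?mulr0 ?addr0 // => l l_lt.
  by apply: tt'; apply: ltn_trans l_lt k_lt.
rewrite (gmul_triangular axis_agree prod_agree) (IH j t t' tt') !mxE natrD.
by case: eqVneq => [->|/negbTE ij]; rewrite /= ?eqxx ?(eq_sym i) ?ij; ring.
Qed.

Definition prod_all_axes t := prod_axes (enum 'I_n) t.

Lemma prod_all_axes_triangular j t t' : agree_below wt (wt j) t t' ->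
  prod_all_axes t' 0 j - t' 0 j = prod_all_axes t 0 j - t 0 j.
Proof.
move=> /(prod_axes_triangular (enum 'I_n)) ->.
by rewrite count_uniq_mem ?enum_uniq // mem_enum /=; ring.
Qed.

(* t is a fixed point of coords_step x iff prod_all_axes t = x. *)
Definition coords_step x t := x - (prod_all_axes t - t).

Definition axes_coords x := iter (\sum_i wt i) (coords_step x) x.

Lemma coords_step_stable x l j : (wt j <= l)%N ->
  iter l (coords_step x) x 0 j = iter l.+1 (coords_step x) x 0 j.
Proof.
elim: l j => [|l IH] j wt_le.
  by move: (gwt_pos j); rewrite lt0n -leqn0 wt_le.
have step t : coords_step x t 0 j = x 0 j - (prod_all_axes t 0 j - t 0 j).
  by rewrite !mxE.
rewrite [in LHS]iterS [in RHS]iterS [in LHS]step [in RHS]step; congr (_ - _).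
apply/esym/prod_all_axes_triangular => i lt_ij; apply: IH.
by rewrite -ltnS (leq_trans lt_ij).
Qed.

Lemma axes_coordsK : cancel axes_coords prod_all_axes.
Proof.
move=> x; have fixed : coords_step x (axes_coords x) = axes_coords x.
  apply/rowP => j; rewrite /axes_coords -iterS; apply/esym/coords_step_stable.
  by rewrite (bigD1 j) //= leq_addr.
by apply/rowP => j; move/rowP/(_ j): fixed; rewrite !mxE; lra.
Qed.

Lemma prod_axes_continuous s : continuous (prod_axes s).
Proof.
elim: s => [|i s IH] /=; first exact: cst_continuous.
apply: gmul_continuous IH.
exact: (continuousT_comp (coord_continuous (i := 0) (j := i))
  (axis_continuous (i := i))).
Qed.

Lemma axes_coords_continuous : continuous axes_coords.
Proof.
rewrite /axes_coords; elim: (\sum_i wt i) => [|l IH] x; first exact: cvg_id.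
have P_cont := continuousT_comp IH (prod_axes_continuous (s := enum 'I_n)).
exact: (continuousB (@cvg_id _ (nbhs x)) (continuousB (P_cont x) (IH x))).
Qed.

End AxisProducts.

Section HhomContinuity.
Variables (R : realType) (G M : graded_group R) (f : gcar G -> gcar M).
Hypothesis hf : hhom f.
Local Notation dilM := (dilw (@gwt R M)).

Lemma hhom_axis i s : f (axis i s) =
  dilM (pos_root (gwt i) s) (f (axis i 1)) +
  dilM (pos_root (gwt i) (- s)) (f (axis i (-1))).
Proof.
have w_gt0 := gwt_pos i; have wM_gt0 := @gwt_pos R M.
have axis_dil c u :
    0 < u -> f (axis i (u * c)) = dilM (pos_root (gwt i) u) (f (axis i c)).
  move=> u_gt0; rewrite -{1}(pos_rootK w_gt0 (ltW u_gt0)) -gdil_axis.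
  exact: hf.2 _ _ (pos_root_gt0 _ u_gt0).
case: (ltgtP s 0) => [s_lt0|s_gt0|->].
- rewrite (pos_root_le0 w_gt0 (ltW s_lt0)) dil0w // add0r -axis_dil ?oppr_gt0 //.
  by rewrite mulrN1 opprK.
- rewrite (@pos_root_le0 _ _ (- s) w_gt0) ?oppr_le0 ?ltW // dil0w // addr0.
  by rewrite -axis_dil // mulr1.
- by rewrite oppr0 pos_root_le0 // !dil0w // addr0 axis0 (hhom0 hf).
Qed.

Lemma hhom_axis_continuous i :
  continuous (fun s : R => f (axis i s) : 'rV[R]_(gdim M)).
Proof.
have -> : (fun s => f (axis i s) : 'rV[R]_(gdim M)) = fun s =>
    dilM (pos_root (gwt i) s) (f (axis i 1)) +
    dilM (pos_root (gwt i) (- s)) (f (axis i (-1))).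
  by apply: funext => s; exact: hhom_axis.
have root_cont := continuous_pos_root (R := R) (gwt_pos i).
have dil_cont c := dilw_continuous (w := @gwt R M) (x := f (axis i c)).
have pos_part := continuousT_comp root_cont (dil_cont 1).
have neg_part := continuousT_comp (continuousT_comp oppr_continuous root_cont)
  (dil_cont (-1)).
by move=> s; exact: (continuousD (pos_part s) (neg_part s)).
Qed.

Lemma hhom_prod_axes_continuous s :
  continuous (fun t => f (prod_axes s t) : 'rV[R]_(gdim M)).
Proof.
elim: s => [|i s IH] /=.
  by rewrite (hhom0 hf); exact: cst_continuous.
have -> : (fun t : 'rV[R]_(gdim G) =>
      f (gmul (axis i (t 0 i)) (prod_axes s t)) : 'rV[R]_(gdim M)) =
    fun t => gmul (f (axis i (t 0 i))) (f (prod_axes s t)).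
  by apply: funext => t; exact: hf.1.
apply: gmul_continuous IH.
exact: (continuousT_comp (coord_continuous (i := 0) (j := i))
  (hhom_axis_continuous (i := i))).
Qed.

Lemma hhom_continuous : continuous (f : 'rV[R]_(gdim G) -> 'rV[R]_(gdim M)).
Proof.
have -> : f = (fun t => f (prod_all_axes t)) \o axes_coords (G := G).
  by apply: funext => x; rewrite /= axes_coordsK.
exact: (continuousT_comp (axes_coords_continuous (G := G))
  (hhom_prod_axes_continuous (s := enum _))).
Qed.

End HhomContinuity.

Lemma hhom_comp (R : realType) (G M K : graded_group R)
    (f : gcar G -> gcar M) (g : gcar M -> gcar K) :
  hhom f -> hhom g -> hhom (g \o f).
Proof.
move=> [fM fD] [gM gD]; split=> [x y|r x r_gt0] /=; first by rewrite fM gM.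
by rewrite fD // gD.
Qed.

Section HhomRange.
Variables (R : realType) (G M : graded_group R) (T : gcar G -> gcar M).
Hypothesis hT : hhom T.

Lemma hhom_range_mul x y : range T x -> range T y -> range T (gmul x y).
Proof. by move=> [a _ <-] [b _ <-]; exists (gmul a b) => //; rewrite hT.1. Qed.

Lemma hhom_range_inv x : range T x -> range T (ginv x).
Proof. by move=> [a _ <-]; exists (ginv a) => //; rewrite (hhomV hT). Qed.

Lemma hhom_range_dil (r : R) x : 0 < r -> range T x -> range T (gdil M r x).
Proof. by move=> r_gt0 [a _ <-]; exists (gdil G r a) => //; rewrite hT.2. Qed.

End HhomRange.

Definition hretraction (R : realType) (M : graded_group R) (H : set (gcar M))
    (p : gcar M -> gcar M) :=
  [/\ hhom p, forall m, H (p m) & forall h, H h -> p h = h].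

Lemma hretractionP (R : realType) (M : graded_group R) (H : set (gcar M)) :
  (exists p, hepi_onto H p /\ (forall h, H h -> p h = h)) <->
  (exists p, hretraction H p).
Proof.
split=> [[p [[p_hom pH _] p_id]]|[p [p_hom pH p_id]]]; exists p => //.
by split=> //; split=> //; exists id; split.
Qed.

Section HhomKernel.
Variables (R : realType) (G M : graded_group R) (f : gcar G -> gcar M).
Hypothesis hf : hhom f.

Lemma hhom_kernel_homogeneous : homogeneous_subgroup [set x | f x = 0].
Proof.
have ker_dil r x : 0 < r -> f x = 0 -> f (gdil G r x) = 0.
  by move=> r_gt0 fx0; rewrite hf.2 // fx0; exact: dilw0.
split=> //=; first exact: hhom0.
- split=> [x y fx0 fy0|x fx0]; first by rewrite hf.1 fx0 fy0 gmul0x.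
  by rewrite (hhomV hf) fx0 ginv0.
- apply: (@preimage_closed _ _ (f : 'rV[R]_(gdim G) -> 'rV[R]_(gdim M)) [set 0]).
    by move=> x _; exact: hhom_continuous.
  exact/accessible_closed_set1/hausdorff_accessible/norm_hausdorff.
- exact: dil_stable_connected (hhom0 hf) ker_dil.
Qed.

Lemma hhom_kernel_normal : normal_subgroup [set x | f x = 0].
Proof. by move=> g x /= fx0; rewrite !hf.1 fx0 gmulx0 (hhomV hf) gmulxV. Qed.

End HhomKernel.

Lemma hretraction_kernel_complementary (R : realType) (M : graded_group R)
    (H : set (gcar M)) (p : gcar M -> gcar M) :
  hretraction H p -> complementary [set m | p m = 0] H.
Proof.
move=> [p_hom pH p_id]; split=> [m|x /= px0 Hx]; last by rewrite -(p_id x Hx).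
exists (gmul m (ginv (p m))), (p m); split=> //=.
  by rewrite p_hom.1 (hhomV p_hom) (p_id _ (pH m)) gmulxV.
by rewrite -gmulA gmulVx gmulx0.
Qed.

Section ComplementRetraction.
Variables (R : realType) (M : graded_group R) (N H : set (gcar M)).
Hypotheses (N0 : N 0) (NM : forall x y, N x -> N y -> N (gmul x y)).
Hypotheses (NV : forall x, N x -> N (ginv x)) (N_normal : normal_subgroup N).
Hypothesis N_dil : forall (r : R) x, 0 < r -> N x -> N (gdil M r x).
Hypotheses (HM : forall x y, H x -> H y -> H (gmul x y)).
Hypotheses (HV : forall x, H x -> H (ginv x)).
Hypothesis H_dil : forall (r : R) x, 0 < r -> H x -> H (gdil M r x).
Hypothesis NH : complementary N H.

Lemma complement_factor_unique n h n' h' : N n -> H h -> N n' -> H h' ->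
  gmul n h = gmul n' h' -> h = h'.
Proof.
move=> Nn Hh Nn' Hh' e; apply: (@gmulIr _ _ (ginv h)); rewrite gmulxV.
apply/esym/NH.2; last by apply: HM => //; apply: HV.
have -> : gmul h' (ginv h) = gmul (ginv n') n.
  rewrite -[in RHS](gmulx0 n) -(gmulxV h) (gmulA n) e -(gmulA n').
  by rewrite (gmulA (ginv n')) gmulVx gmul0x.
by apply: NM => //; apply: NV.
Qed.

Lemma complement_retraction : exists p, hretraction H p.
Proof.
have /choice[p pP] : forall m, exists h, exists n, [/\ N n, H h & m = gmul n h].
  by move=> m; have [n [h nh]] := NH.1 m; exists h, n.
have pE m n h : N n -> H h -> m = gmul n h -> p m = h.
  move=> Nn Hh ->; have [n' [Nn' Hp e]] := pP (gmul n h).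
  exact: complement_factor_unique Nn' Hp Nn Hh (esym e).
exists p; split=> [|m|h Hh]; last 2 first.
- by have [n [_ Hp _]] := pP m.
- by apply: (pE _ 0) => //; rewrite gmul0x.
split=> [x y|r x r_gt0].
  have [[nx [Nx Hx ex]] [ny [Ny Hy ey]]] := (pP x, pP y).
  apply: (pE _ (gmul nx (gmul (gmul (p x) ny) (ginv (p x))))).
  - by apply: NM => //; apply: N_normal.
  - exact: HM.
  by rewrite {1}ex {1}ey gmul_conj.
have [nx [Nx Hx ex]] := pP x.
apply: (pE _ (gdil M r nx)); [exact: N_dil|exact: H_dil|].
by rewrite {1}ex /gdil gdil_mul.
Qed.

End ComplementRetraction.

Section HmonoRetraction.
Variables (R : realType) (G M : graded_group R) (T : gcar G -> gcar M).
Hypothesis hT : hhom T.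

Lemma hretraction_hmono p : injective T -> hretraction (range T) p -> hmono T.
Proof.
move=> T_inj [p_hom pT p_id].
have /choice[g gP] : forall m, exists x, T x = p m.
  by move=> m; have [x _ e] := pT m; exists x.
have gT x : g (T x) = x by apply: T_inj; rewrite gP p_id //; exists x.
split=> //; exists g; split=> //; split=> [x y|r x r_gt0]; apply: T_inj.
  by rewrite hT.1 !gP p_hom.1.
by rewrite hT.2 // !gP p_hom.2.
Qed.

Lemma hmono_hretraction : hmono T -> exists p, hretraction (range T) p.
Proof.
move=> [_ [g [g_hom gT]]]; exists (T \o g); split=> [|m|_ [x _ <-]] /=.
- exact: hhom_comp.
- by exists (g m).
- by rewrite gT.
Qed.

End HmonoRetraction.

Theorem proposition7p18 (R : realType) (G M : graded_group R)
  (T : gcar G -> gcar M) :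
  hhom T -> injective T ->
  let H := range T in
  ((exists N : set (gcar M),
      [/\ homogeneous_subgroup N, normal_subgroup N & complementary N H])
   <->
   (exists p : gcar M -> gcar M,
      hepi_onto H p /\ (forall h, H h -> p h = h)))
  /\
  ((exists p : gcar M -> gcar M,
      hepi_onto H p /\ (forall h, H h -> p h = h))
   <-> hmono T).
Proof.
move=> hT T_inj H; rewrite /H (propext (hretractionP (range T))).
split; split.
- move=> [N [[N0 [NM NV] _ _ N_dil] N_normal NH]].
  exact: (complement_retraction N0 NM NV N_normal N_dil
    (hhom_range_mul hT) (hhom_range_inv hT) (hhom_range_dil hT) NH).
- move=> [p p_retr]; have [p_hom _ _] := p_retr.
  exists [set m | p m = 0]; split.
  + exact: hhom_kernel_homogeneous.
  + exact: hhom_kernel_normal.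
  + exact: hretraction_kernel_complementary.
- by move=> [p]; exact: hretraction_hmono.
- exact: hmono_hretraction.
Qed.
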